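(* Let $\Lambda$ be a left cancellative small category, $v\in\Lambda^0$, and $C\in v\Lambda^*$. Then $C\in v\partial\Lambda$ if and only if: for every finite $\mathcal F\subseteq\mathcal D^{(0)}_v$ that does not cover $C$ and every $E\in C$, there exists $G\in\mathcal D^{(0)}_v$ with $G\subseteq E\setminus\bigcup\mathcal F$.
   Context: A left cancellative small category (LCSC) is a small category $\Lambda$ such that $\alpha\beta=\alpha\gamma$ implies $\beta=\gamma$. Composition $\alpha\beta$ is defined when $s(\alpha)=r(\beta)$; $\Lambda^0$ is the set of objects; $v\Lambda=\{\alpha:r(\alpha)=v\}$. For $\alpha\in\Lambda$, $\tau^\alpha(\beta)=\alpha\beta$ on $s(\alpha)\Lambda$ and $\sigma^\alpha:\alpha\Lambda\to s(\alpha)\Lambda$ is its inverse. A zigzag is a tuple $\zeta=(\alpha_1,\beta_1,\dots,\alpha_n,\beta_n)$ with $r(\alpha_i)=r(\beta_i)$ and $s(\alpha_{i+1})=s(\beta_i)$, $s(\zeta)=s(\beta_n)$; the zigzag map $\varphi_\zeta=\sigma^{\alpha_1}\circ\tau^{\beta_1}\circ\cdots\circ\sigma^{\alpha_n}\circ\tau^{\beta_n}$ (partial map) has domain $A(\zeta)\subseteq s(\zeta)\Lambda$. $\mathcal D^{(0)}_v$ is the set of nonempty $A(\zeta)$ with $s(\zeta)=v$, and $\mathcal A_v$ the ring of subsets of $v\Lambda$ generated by it. A filter in $\mathcal D^{(0)}_v$ is a nonempty $C\subseteq\mathcal D^{(0)}_v$ closed under intersection and under supersets within $\mathcal D^{(0)}_v$.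 A finite $\mathcal F\subseteq\mathcal D^{(0)}_v$ covers the filter $C$ if some $E\in C$ satisfies $E\subseteq\bigcup\mathcal F$. $v\Lambda^*$ is the set of filters $C$ in $\mathcal D^{(0)}_v$ such that every finite $\mathcal F\subseteq\mathcal D^{(0)}_v$ with $\mathcal F\cap C=\varnothing$ does not cover $C$; $v\Lambda^{**}$ is its set of maximal elements. $v\Lambda^*$ is identified with the space $X_v$ of ultrafilters of the ring $\mathcal A_v$ via $C\mapsto\mathcal U_C$, the unique ultrafilter of $\mathcal A_v$ with $\mathcal U_C\cap\mathcal D^{(0)}_v=C$ (generated by the sets $E\setminus\bigcup\mathcal F$, $E\in C$, $\mathcal F$ finite not covering $C$); $X_v$ carries the topology with compact open basis $\widehat A=\{C: A\in\mathcal U_C\}$, $A\in\mathcal A_v$. The boundary $v\partial\Lambda$ is the closure of $v\Lambda^{**}$ in $X_v$. *)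

From Stdlib Require Import List.
Import ListNotations.
Set Implicit Arguments.

(** A small category, with total composition whose values only matter when
    [src a = rng b]; left cancellative. *)
Record LCSC := {
  Obj : Type;
  Mor : Type;
  src : Mor -> Obj;
  rng : Mor -> Obj;
  idm : Obj -> Mor;
  comp : Mor -> Mor -> Mor;
  src_idm : forall v, src (idm v) = v;
  rng_idm : forall v, rng (idm v) = v;
  src_comp : forall a b, src a = rng b -> src (comp a b) = src b;
  rng_comp : forall a b, src a = rng b -> rng (comp a b) = rng a;
  comp_assoc : forall a b c, src a = rng b -> src b = rng c ->
      comp a (comp b c) = comp (comp a b) c;
  comp_id_l : forall a, comp (idm (rng a)) a = a;
  comp_id_r : forall a, comp a (idm (src a)) = a;
  lcancel : forall a b c, src a = rng b -> src a = rng c ->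
      comp a b = comp a c -> b = c
}.

Arguments src {l} _.
Arguments rng {l} _.
Arguments idm {l} _.
Arguments comp {l} _ _.

Section Defs.
Variable L : LCSC.

Definition mset := Mor L -> Prop.
Definition msub (A B : mset) : Prop := forall x, A x -> B x.

(** A zigzag (a1,b1,...,an,bn) is the list [(a1,b1);...;(an,bn)], n >= 1. *)
Fixpoint zchain (l : list (Mor L * Mor L)) : Prop :=
  match l with
  | p :: ((q :: _) as t) => src (fst q) = src (snd p) /\ zchain t
  | _ => True
  end.

Definition is_zigzag (l : list (Mor L * Mor L)) : Prop :=
  l <> [] /\ Forall (fun p => rng (fst p) = rng (snd p)) l /\ zchain l.

Fixpoint zlast (l : list (Mor L * Mor L)) : option (Mor L * Mor L) :=
  match l with
  | [] => None
  | [p] => Some p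
  | _ :: t => zlast t
  end.

Definition zsrc_is (l : list (Mor L * Mor L)) (v : Obj L) : Prop :=
  exists p, zlast l = Some p /\ src (snd p) = v.

(** Graph of the partial zigzag map
    phi = sigma^{a1} o tau^{b1} o ... o sigma^{an} o tau^{bn}:
    [zrel l g d] means phi_l(g) is defined and equals d. *)
Fixpoint zrel (l : list (Mor L * Mor L)) (g d : Mor L) : Prop :=
  match l with
  | [] => g = d
  | (a, b) :: l' => exists e, zrel l' g e /\ rng e = src b /\
                     rng d = src a /\ comp b e = comp a d
  end.

Definition zdom (l : list (Mor L * Mor L)) : mset := fun g => exists d, zrel l g d.

Definition D0 (v : Obj L) (E : mset) : Prop :=
  (exists l, is_zigzag l /\ zsrc_is l v /\ (forall x, E x <-> zdom l x)) /\
  (exists x, E x).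

Definition is_filter (v : Obj L) (C : mset -> Prop) : Prop :=
  (exists E, C E) /\
  (forall E, C E -> D0 v E) /\
  (forall E F, C E -> C F -> C (fun x => E x /\ F x)) /\
  (forall E F, C E -> D0 v F -> msub E F -> C F).

Definition union_of (Fs : list mset) : mset := fun x => exists F, In F Fs /\ F x.

Definition family_in_D0 (v : Obj L) (Fs : list mset) : Prop :=
  forall F, In F Fs -> D0 v F.

Definition covers (Fs : list mset) (C : mset -> Prop) : Prop :=
  exists E, C E /\ msub E (union_of Fs).

Definition in_star (v : Obj L) (C : mset -> Prop) : Prop :=
  is_filter v C /\
  forall Fs, family_in_D0 v Fs -> (forall F, In F Fs -> ~ C F) -> ~ covers Fs C.

Definition in_star_max (v : Obj L) (C : mset -> Prop) : Prop :=
  in_star v C /\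
  forall C', in_star v C' -> (forall E, C E -> C' E) -> (forall E, C' E -> C E).

Inductive ringA (v : Obj L) : mset -> Prop :=
  | ringA_base : forall E, D0 v E -> ringA v E
  | ringA_empty : ringA v (fun _ => False)
  | ringA_union : forall A B, ringA v A -> ringA v B -> ringA v (fun x => A x \/ B x)
  | ringA_diff : forall A B, ringA v A -> ringA v B -> ringA v (fun x => A x /\ ~ B x)
  | ringA_ext : forall A B, ringA v A -> (forall x, A x <-> B x) -> ringA v B.

(** The ultrafilter U_C of A_v attached to C in v Lambda^*: generated by the
    sets E \ U F, E in C, F finite in D0 not covering C. *)
Definition UC (v : Obj L) (C : mset -> Prop) (A : mset) : Prop :=
  ringA v A /\
  exists E Fs, C E /\ family_in_D0 v Fs /\ ~ covers Fs C /\
    msub (fun x => E x /\ ~ union_of Fs x) A.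

(** C in v(boundary Lambda): U_C lies in the closure of v Lambda^{**} in X_v,
    i.e. every basic open neighbourhood hat(A) (A in A_v, A in U_C) contains
    some U_{C'} with C' in v Lambda^{**}. *)
Definition in_boundary (v : Obj L) (C : mset -> Prop) : Prop :=
  forall A, ringA v A -> UC v C A -> exists C', in_star_max v C' /\ UC v C' A.

End Defs.

(* [D^(0)_v] is closed under nonempty intersections: the zigzag [zeta' zeta^{-1} zeta]
   has domain [A(zeta) /\ A(zeta')].  Hence by Zorn's lemma every filter in [D^(0)_v]
   extends to a maximal one, and the maximal filters are exactly the elements of
   [vLambda^**].  For such an ultrafilter [U], any finite family not covering [U] is
   avoided by a member of [U], so [U_U] consists of the sets of [A_v] containing a
   member of [U].  Thus the basic neighbourhood of [C] given by [E \ U F] meets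
   [vLambda^**] iff [E \ U F] contains some [G] in [D^(0)_v]: conversely, extend the
   principal filter of such a [G] to an ultrafilter. *)

From Stdlib Require Import List Classical.
From mathcomp Require classical_sets.
Import ListNotations.
Set Implicit Arguments.
Unset Strict Implicit.

Arguments zrel {L} l g d.
Arguments zlast {L} l.
Arguments zchain {L} l.
Arguments is_zigzag {L} l.
Arguments zsrc_is {L} l v.
Arguments zdom {L} l _.

Section Zigzags.
Variable L : LCSC.
Implicit Types (l : list (Mor L * Mor L)) (p q : Mor L * Mor L) (g d : Mor L) (v : Obj L).

Definition zinv l : list (Mor L * Mor L) := rev (map (fun p => (snd p, fst p)) l).

Lemma zinv_cons p l : zinv (p :: l) = zinv l ++ [(snd p, fst p)].
Proof. reflexivity. Qed.

Lemma zinv_eq_nil l : zinv l = [] -> l = [].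
Proof.
  intros H. apply (f_equal (@length _)) in H.
  unfold zinv in H. rewrite length_rev, length_map in H. now destruct l.
Qed.

Lemma zrel_app l1 l2 g d : zrel (l1 ++ l2) g d <-> exists e, zrel l2 g e /\ zrel l1 e d.
Proof.
  revert d; induction l1 as [|[a b] l1 IH]; intros d; simpl.
  - split; [intros H; now exists d | now intros [e [H <-]]].
  - split.
    + intros [e [He Hd]]. apply IH in He as [f [Hf He]]. exists f; split; eauto.
    + intros [f [Hf [e [He Hd]]]]. exists e; split; [apply IH; eauto | exact Hd].
Qed.

Lemma zrel_functional l g d1 d2 : zrel l g d1 -> zrel l g d2 -> d1 = d2.
Proof.
  revert d1 d2; induction l as [|[a b] l IH]; simpl; intros d1 d2.
  - congruence.
  - intros [e1 [H1 [r1 [s1 c1]]]] [e2 [H2 [r2 [s2 c2]]]].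
    rewrite (IH _ _ H1 H2) in c1.
    apply (lcancel L a); congruence.
Qed.

Lemma zrel_zinv l g d : zrel l g d -> zrel (zinv l) d g.
Proof.
  revert d; induction l as [|[a b] l IH]; simpl; intros d.
  - now intros ->.
  - intros [e [He [r [s c]]]]. rewrite zinv_cons. apply zrel_app.
    exists e; split; [|now apply IH].
    simpl. exists d; repeat split; auto.
Qed.

Lemma zdom_zinv_app l g : zdom l g -> zrel (zinv l ++ l) g g.
Proof. intros [d Hd]. apply zrel_app. exists d; split; [exact Hd | now apply zrel_zinv]. Qed.

Lemma zlast_app l1 l2 : l2 <> [] -> zlast (l1 ++ l2) = zlast l2.
Proof.
  intros Hl2. induction l1 as [|p [|q t] IH]; simpl in *; auto.
  now destruct l2.
Qed.

Lemma zlast_zinv p l : zlast (zinv (p :: l)) = Some (snd p, fst p).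
Proof. rewrite zinv_cons, zlast_app; [reflexivity | discriminate]. Qed.

Lemma hd_error_zinv l : hd_error (zinv l) = option_map (fun p => (snd p, fst p)) (zlast l).
Proof.
  induction l as [|p [|q t] IH]; auto.
  rewrite zinv_cons.
  destruct (zinv (q :: t)) eqn:E; [now apply zinv_eq_nil in E | exact IH].
Qed.

Lemma zchain_tail p l : zchain (p :: l) -> zchain l.
Proof. destruct l; simpl; tauto. Qed.

Lemma zchain_app l1 l2 : zchain l1 -> zchain l2 ->
  (forall p q, zlast l1 = Some p -> hd_error l2 = Some q -> src (fst q) = src (snd p)) ->
  zchain (l1 ++ l2).
Proof.
  induction l1 as [|p [|p' t] IH]; simpl; intros H1 H2 Hjoin; auto.
  - destruct l2 as [|q l2]; [exact I|]. split; [now apply Hjoin | exact H2].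
  - destruct H1 as [Hp Ht]. split; [exact Hp | now apply IH].
Qed.

Lemma zchain_zinv l : zchain l -> zchain (zinv l).
Proof.
  induction l as [|p t IH]; simpl; auto.
  intros H. rewrite zinv_cons. apply zchain_app; [now apply IH, zchain_tail with p | exact I|].
  intros p0 q0 Hlast Hhd. injection Hhd as <-.
  destruct t as [|q t]; [discriminate|].
  rewrite zlast_zinv in Hlast. injection Hlast as <-.
  symmetry; apply H.
Qed.

Lemma is_zigzag_app l1 l2 : is_zigzag l1 -> is_zigzag l2 ->
  (forall p q, zlast l1 = Some p -> hd_error l2 = Some q -> src (fst q) = src (snd p)) ->
  is_zigzag (l1 ++ l2).
Proof.
  intros [n1 [r1 c1]] [n2 [r2 c2]] Hjoin. repeat split.
  - now destruct l1.
  - now apply Forall_app.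
  - now apply zchain_app.
Qed.

Lemma is_zigzag_zinv l : is_zigzag l -> is_zigzag (zinv l).
Proof.
  intros [n [r c]]. repeat split.
  - intros H; now apply zinv_eq_nil in H.
  - apply Forall_rev, Forall_map. eapply Forall_impl; [|exact r]. intros; simpl; auto.
  - now apply zchain_zinv.
Qed.

Lemma zsrc_is_app l1 l2 v : l2 <> [] -> zsrc_is (l1 ++ l2) v <-> zsrc_is l2 v.
Proof. intros H. unfold zsrc_is. now rewrite zlast_app. Qed.

(* [phi_{zeta^{-1} zeta}] is the identity on [A(zeta)] because [phi_zeta] is a partial function. *)
Lemma zdom_meet l l' g :
  zdom (l' ++ zinv l ++ l) g <-> zdom l g /\ zdom l' g.
Proof.
  split.
  - intros [d Hd]. apply zrel_app in Hd as [e [He Hd]].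
    apply zrel_app in He as [f [Hf He]].
    rewrite (zrel_functional He (zrel_zinv Hf)) in Hd.
    split; [exists f | exists d]; assumption.
  - intros [Hl [d Hd]]. exists d. apply zrel_app. exists g.
    split; [now apply zdom_zinv_app | exact Hd].
Qed.

Lemma is_zigzag_meet l l' v : is_zigzag l -> zsrc_is l v -> is_zigzag l' -> zsrc_is l' v ->
  is_zigzag (l' ++ zinv l ++ l) /\ zsrc_is (l' ++ zinv l ++ l) v.
Proof.
  intros Hl [pl [Ell Hpl]] Hl' [pl' [Ell' Hpl']].
  assert (Hne : l <> []) by apply Hl.
  split.
  - apply is_zigzag_app; [exact Hl' | apply is_zigzag_app; [now apply is_zigzag_zinv | exact Hl|] |].
    + destruct l as [|p t]; [contradiction|]. rewrite zlast_zinv.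
      intros p0 q0 E1 E2; injection E1 as <-; injection E2 as <-; reflexivity.
    + intros p q E1 E2. rewrite Ell' in E1; injection E1 as <-.
      destruct (zinv l) as [|r s] eqn:Ez; [now apply zinv_eq_nil in Ez|].
      pose proof (hd_error_zinv l) as Hhd. rewrite Ez, Ell in Hhd.
      simpl in E2, Hhd. rewrite E2 in Hhd. injection Hhd as ->. simpl. congruence.
  - apply zsrc_is_app; [intros H; apply Hne; now apply app_eq_nil in H|]. apply zsrc_is_app; [exact Hne|]. now exists pl.
Qed.

End Zigzags.

Arguments zinv {L} l.

Section Filters.
Variables (L : LCSC) (v : Obj L).
Implicit Types (A B E F G H : mset L) (C U : mset L -> Prop) (Fs : list (mset L)).

Lemma D0_inhabited E : D0 v E -> exists x, E x.
Proof. now intros [_ H]. Qed.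

Lemma D0_meet A B : D0 v A -> D0 v B -> (exists x, A x /\ B x) ->
  D0 v (fun x => A x /\ B x).
Proof.
  intros [[l [Hl [Sl El]]] _] [[l' [Hl' [Sl' El']]] _] Hne. split; [|exact Hne].
  destruct (is_zigzag_meet Hl Sl Hl' Sl') as [Hz Hs].
  exists (l' ++ zinv l ++ l). split; [exact Hz | split; [exact Hs|]].
  intros x. rewrite zdom_meet, <- El, <- El'. tauto.
Qed.

Lemma filter_D0 C E : is_filter v C -> C E -> D0 v E.
Proof. intros [_ [HD _]]; apply HD. Qed.

Lemma filter_meet C E F : is_filter v C -> C E -> C F -> C (fun x => E x /\ F x).
Proof. intros [_ [_ [HI _]]]; apply HI. Qed.

Lemma filter_member_inhabited C E : is_filter v C -> C E -> exists x, E x.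
Proof. intros HC HE. exact (D0_inhabited (filter_D0 HC HE)). Qed.

Definition ultrafilter U : Prop :=
  is_filter v U /\
  forall U', is_filter v U' -> (forall E, U E -> U' E) -> forall E, U' E -> U E.

Definition principal_filter G : mset L -> Prop := fun H => D0 v H /\ msub G H.

Lemma is_filter_principal G : D0 v G -> is_filter v (principal_filter G).
Proof.
  intros DG. split; [|split; [|split]].
  - exists G. split; [exact DG | now intros x].
  - now intros H [DH _].
  - intros H1 H2 [D1 S1] [D2 S2]. split.
    + apply D0_meet; [exact D1 | exact D2|].
      destruct (D0_inhabited DG) as [x Gx]. exists x; auto.
    + intros x Gx; auto.
  - intros H1 H2 [_ S1] D2 S. split; [exact D2 | intros x Gx; auto].
Qed.

Definition adjoin U F : mset L -> Prop :=
  fun H => D0 v H /\ exists E, U E /\ msub (fun x => E x /\ F x) H.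

Lemma is_filter_adjoin U F : is_filter v U -> D0 v F ->
  (forall E, U E -> exists x, E x /\ F x) -> is_filter v (adjoin U F).
Proof.
  intros HU DF Hmeet. destruct (proj1 HU) as [E0 UE0].
  split; [|split; [|split]].
  - exists F. split; [exact DF|]. exists E0. split; [exact UE0 | now intros x []].
  - now intros H [DH _].
  - intros H1 H2 [D1 [E1 [U1 S1]]] [D2 [E2 [U2 S2]]].
    pose proof (filter_meet HU U1 U2) as U12.
    split.
    + apply D0_meet; [exact D1 | exact D2|].
      destruct (Hmeet _ U12) as [x [[x1 x2] xF]]. exists x; auto.
    + exists (fun x => E1 x /\ E2 x). split; [exact U12|]. intros x [[x1 x2] xF]; auto.
  - intros H1 H2 [_ [E1 [U1 S1]]] D2 S. split; [exact D2|]. exists E1; split; auto.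
    intros x Hx; auto.
Qed.

Lemma filter_chain_union (Cs : (mset L -> Prop) -> Prop) :
  (forall X Y, Cs X -> Cs Y -> (forall E, X E -> Y E) \/ (forall E, Y E -> X E)) ->
  (forall X, Cs X -> (exists E, X E) -> is_filter v X) ->
  (exists E, exists2 X, Cs X & X E) ->
  is_filter v (fun E => exists2 X, Cs X & X E).
Proof.
  intros Htot Hfil Hne.
  assert (HX : forall X E, Cs X -> X E -> is_filter v X) by (intros X E CX XE; apply Hfil; eauto).
  split; [exact Hne | split; [|split]].
  - intros E [X CX XE]. exact (filter_D0 (HX _ _ CX XE) XE).
  - intros E F [X CX XE] [Y CY YF].
    destruct (Htot X Y CX CY) as [XY|YX].
    + exists Y; [exact CY | apply (filter_meet (HX _ _ CY YF)); auto].
    + exists X; [exact CX | apply (filter_meet (HX _ _ CX XE)); auto].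
  - intros E F [X CX XE] DF EF. exists X; [exact CX|].
    destruct (HX _ _ CX XE) as [_ [_ [_ Hup]]]. eapply Hup; eauto.
Qed.

Lemma ultrafilter_extends C : is_filter v C -> exists U, ultrafilter U /\ forall E, C E -> U E.
Proof.
  intros HC.
  (* Chains may be empty, so the Zorn predicate is vacuous on the empty collection. *)
  pose (P := fun X : mset L -> Prop =>
    (exists E, X E) -> is_filter v X /\ forall E, C E -> X E).
  destruct (@classical_sets.Zorn_bigcup (mset L) P) as [A [PA Amax]].
  - intros Cs HP Htot [E [X CX XE]]. split.
    + apply filter_chain_union; [exact Htot | | now exists E, X].
      intros Y CY HY. now apply HP.
    + intros F CF. exists X; [exact CX|]. apply (HP X CX); eauto.
  - assert (Ainh : exists E, A E).
    { apply NNPP. intros Aemp. destruct (proj1 HC) as [E0 CE0].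
      apply (Amax C); [split | now intros _].
      - intros E AE. exfalso; eauto.
      - intros Hsub. apply Aemp. exists E0. now apply Hsub. }
    destruct (PA Ainh) as [HA CA].
    exists A. split; [split; [exact HA|] | exact CA].
    intros U' HU' AU' E U'E. apply NNPP. intros nAE.
    apply (Amax U'); [split; [exact AU'|] | ].
    + intros Hsub. now apply nAE, Hsub.
    + intros _. split; [exact HU' | auto].
Qed.

Lemma ultrafilter_avoid_D0 U F : ultrafilter U -> D0 v F -> ~ U F ->
  exists E, U E /\ forall x, E x -> ~ F x.
Proof.
  intros [HU Umax] DF nUF. apply NNPP. intros Hno.
  assert (Hmeet : forall E, U E -> exists x, E x /\ F x).
  { intros E UE. apply NNPP. intros Hdisj. apply Hno. exists E. split; [exact UE|].
    intros x Ex Fx. apply Hdisj; eauto. }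
  apply nUF, (Umax (adjoin U F)); [now apply is_filter_adjoin | |].
  - intros E UE. split; [exact (filter_D0 HU UE)|]. exists E. split; [exact UE | now intros x []].
  - destruct (proj1 HU) as [E0 UE0].
    split; [exact DF|]. exists E0. split; [exact UE0 | now intros x []].
Qed.

Lemma ultrafilter_avoid U Fs : ultrafilter U -> family_in_D0 v Fs ->
  (forall F, In F Fs -> ~ U F) -> exists E, U E /\ forall x, E x -> ~ union_of Fs x.
Proof.
  intros HU. induction Fs as [|F Fs IH]; intros HD HN.
  - destruct (proj1 (proj1 HU)) as [E0 UE0]. exists E0. split; [exact UE0|].
    now intros x _ [F [[] _]].
  - destruct IH as [E1 [UE1 D1]]; [intros G hG; apply HD; now right | intros G hG; apply HN; now right |].
    destruct (ultrafilter_avoid_D0 HU (HD F (or_introl eq_refl)) (HN F (or_introl eq_refl)))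
      as [E2 [UE2 D2]].
    exists (fun x => E1 x /\ E2 x). split; [exact (filter_meet (proj1 HU) UE1 UE2)|].
    intros x [x1 x2] [G [[<-|hG] Gx]]; [exact (D2 x x2 Gx) | apply (D1 x x1); now exists G].
Qed.

Lemma ultrafilter_in_star U : ultrafilter U -> in_star v U.
Proof.
  intros HU. split; [exact (proj1 HU)|]. intros Fs HD HN [E [UE Hcov]].
  destruct (ultrafilter_avoid HU HD HN) as [E' [UE' HE']].
  destruct (filter_member_inhabited (proj1 HU) (filter_meet (proj1 HU) UE UE')) as [x [Ex E'x]].
  exact (HE' x E'x (Hcov x Ex)).
Qed.

Lemma ultrafilter_in_star_max U : ultrafilter U -> in_star_max v U.
Proof.
  intros HU. split; [now apply ultrafilter_in_star|].
  intros U' [HU' _]. now apply (proj2 HU).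
Qed.

Lemma in_star_max_ultrafilter U : in_star_max v U -> ultrafilter U.
Proof.
  intros [[HU _] Umax].
  destruct (ultrafilter_extends HU) as [U' [HU' UU']].
  assert (U'U : forall E, U' E -> U E) by exact (Umax U' (ultrafilter_in_star HU') UU').
  split; [exact HU|]. intros U'' HU'' UU'' E U''E.
  apply U'U, (proj2 HU' U'' HU''); auto.
Qed.

Lemma ringA_union_of Fs : family_in_D0 v Fs -> ringA v (union_of Fs).
Proof.
  induction Fs as [|F Fs IH]; intros HD.
  - apply ringA_ext with (fun _ => False); [apply ringA_empty|].
    intros x; split; [easy | now intros [G [[] _]]].
  - apply ringA_ext with (fun x => F x \/ union_of Fs x).
    + apply ringA_union; [apply ringA_base, HD; now left | apply IH; intros G hG; apply HD; now right].
    + intros x; split.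
      * intros [Fx | [G [hG Gx]]]; [exists F | exists G]; simpl; auto.
      * intros [G [[<-|hG] Gx]]; [now left | right; now exists G].
Qed.

Lemma UC_ultrafilter U A : ultrafilter U ->
  UC v U A <-> ringA v A /\ exists G, U G /\ msub G A.
Proof.
  intros HU. split.
  - intros [RA [E [Fs [UE [HD [HNC Sub]]]]]]. split; [exact RA|].
    destruct (ultrafilter_avoid HU HD) as [E' [UE' HE']].
    { intros F hF UF. apply HNC. exists F. split; [exact UF|]. intros x Fx. now exists F. }
    exists (fun x => E x /\ E' x). split; [exact (filter_meet (proj1 HU) UE UE')|].
    intros x [Ex E'x]. apply Sub. split; [exact Ex | exact (HE' x E'x)].
  - intros [RA [G [UG GA]]]. split; [exact RA|]. exists G, [].
    split; [exact UG|]. split; [now intros F []|]. split.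
    + intros [E [UE Hcov]]. destruct (filter_member_inhabited (proj1 HU) UE) as [x Ex].
      now destruct (Hcov x Ex) as [F [[] _]].
    + intros x [Gx _]. exact (GA x Gx).
Qed.
End Filters.

Theorem mainTheorem12 (L : LCSC) (v : Obj L) (C : mset L -> Prop)
  (HC : in_star v C) :
  in_boundary v C <->
  (forall (Fs : list (mset L)), family_in_D0 v Fs -> ~ covers Fs C ->
     forall E, C E ->
       exists G, D0 v G /\ msub G (fun x => E x /\ ~ union_of Fs x)).
Proof.
  split.
  - intros Hbd Fs HD HNC E CE.
    assert (RA : ringA v (fun x => E x /\ ~ union_of Fs x)).
    { apply ringA_diff; [apply ringA_base, (filter_D0 (proj1 HC) CE) | now apply ringA_union_of]. }
    destruct (Hbd _ RA) as [C' [HC' UCA]].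
    { split; [exact RA|]. exists E, Fs. split; [exact CE | split; [exact HD | split; [exact HNC | now intros x]]]. }
    apply (UC_ultrafilter _ (in_star_max_ultrafilter HC')) in UCA as [_ [G [C'G GA]]].
    exists G. split; [exact (filter_D0 (proj1 (proj1 HC')) C'G) | exact GA].
  - intros Havoid A RA [_ [E [Fs [CE [HD [HNC Sub]]]]]].
    destruct (Havoid Fs HD HNC E CE) as [G [DG GA]].
    destruct (ultrafilter_extends (is_filter_principal DG)) as [U [HU GU]].
    exists U. split; [now apply ultrafilter_in_star_max|].
    apply (UC_ultrafilter _ HU). split; [exact RA|].
    exists G. split; [apply GU; split; [exact DG | now intros x] | intros x Gx; apply Sub, GA, Gx].
Qed.
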